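(* Let $\mathcal{V} = \{(x,y) \in \mathbb{C}^2 : e^{-x} + e^{-y} - 1 = 0\}$. If $(a,b) \in \mathcal{V} \cap (0,1)^2$, then $(a,b)$ is strictly minimal on $\mathcal{V}$, i.e. the closed bidisk $\{(z,w)\in\mathbb{C}^2 : |z|\le a,\ |w| \le b\}$ intersects $\mathcal{V}$ only at the point $(a,b)$. *)

From Stdlib Require Import Reals.
From Coquelicot Require Export Coquelicot.
Open Scope R_scope.

Definition cexp (z : C) : C :=
  (exp (Re z) * cos (Im z), exp (Re z) * sin (Im z)).

Definition inV (x y : C) : Prop :=
  (cexp (- x) + cexp (- y) - 1)%C = 0%C.

From Stdlib Require Import Reals Lra Psatz.
From Coquelicot Require Import Coquelicot.
Open Scope R_scope.

(* For |z| <= a < 1, put d = a - Re z >= 0.  Since (Im z)^2 <= a^2 - (Re z)^2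
   = d (2a - d), the second-order Taylor bounds for cos and exp give
   Re e^{-z} = e^{-a} e^d cos (Im z) >= e^{-a} (1 + (1 - a) d).
   On V the real parts of e^{-z} and e^{-w} add up to 1 = e^{-a} + e^{-b}, so
   both excesses vanish: Re z = a and Re w = b, which together with |z| <= a
   and |w| <= b leaves only z = a and w = b. *)

Lemma exp_ge_taylor2 (d : R) : 0 <= d -> 1 + d + d ^ 2 / 2 <= exp d.
Proof.
  intro d_ge0. eapply Rle_trans; [| exact (exp_ge_taylor d 2 d_ge0)].
  simpl. lra.
Qed.

Lemma cos_ge_taylor2 (y : R) : 1 - y ^ 2 / 2 <= cos y.
Proof.
  destruct (Rle_lt_dec (Rabs y) 2) as [y_small | y_large].
  - apply Rabs_le_between in y_small.
    destruct (pre_cos_bound y 0) as [lb _]; try lra.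
    eapply Rle_trans; [| exact lb]. unfold cos_approx, cos_term. simpl. lra.
  - pose proof (COS_bound y) as cos_bounds.
    assert (4 < y ^ 2) by (rewrite <- (pow2_abs y); nra).
    lra.
Qed.

Lemma Cmod_le_Re (z : C) : Cmod z <= Re z -> z = RtoC (Re z).
Proof.
  intro Hz.
  assert (Im_sqr : Im z ^ 2 <= 0).
  { pose proof (Cmod2_alt z). pose proof (Cmod_ge_0 z). nra. }
  destruct z as [x y]. unfold RtoC. simpl in *. f_equal. nra.
Qed.

Lemma Re_cexp_opp (z : C) : Re (cexp (- z)) = exp (- Re z) * cos (Im z).
Proof. unfold cexp. simpl. now rewrite cos_neg. Qed.

Lemma inV_Re_cexp (z w : C) : inV z w -> Re (cexp (- z)) + Re (cexp (- w)) = 1.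
Proof. intro Hzw. apply (f_equal Re) in Hzw. simpl in Hzw. simpl. lra. Qed.

Lemma Re_cexp_opp_ge (a : R) (z : C) : a <= 1 -> Cmod z <= a ->
  exp (- a) * (1 + (1 - a) * (a - Re z)) <= Re (cexp (- z)).
Proof.
  intros a_le1 Hz. rewrite Re_cexp_opp.
  set (x := Re z) in *. set (y := Im z). set (d := a - x).
  pose proof (Rle_trans _ _ _ (Rle_abs x) (re_le_Cmod z)) as x_le_a.
  assert (d_ge0 : 0 <= d) by (unfold d; lra).
  assert (y_sqr : y ^ 2 <= d * (2 * a - d)).
  { pose proof (Cmod2_alt z). pose proof (Cmod_ge_0 z). unfold d, x, y in *. nra. }
  assert (cos_lb : 1 - a * d + d ^ 2 / 2 <= cos y).
  { pose proof (cos_ge_taylor2 y). nra. }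
  assert (exp_split : exp (- x) = exp (- a) * exp d).
  { rewrite <- exp_plus. f_equal. unfold d. ring. }
  assert (excess : 1 + (1 - a) * d <= exp d * cos y).
  { pose proof (exp_ge_taylor2 d d_ge0) as exp_lb.
    assert (quad_pos : 0 <= 1 - a * d + d ^ 2 / 2).
    { pose proof (Cmod_ge_0 z). pose proof (pow2_ge_0 (d - a)). nra. }
    apply Rle_trans with ((1 + d + d ^ 2 / 2) * (1 - a * d + d ^ 2 / 2)).
    - replace ((1 + d + d ^ 2 / 2) * (1 - a * d + d ^ 2 / 2))
        with (1 + (1 - a) * d + (1 - a) * (d ^ 2 + d ^ 3 / 2) + d ^ 4 / 4) by field.
      assert (0 <= d ^ 3) by (apply pow_le; lra).
      assert (0 <= d ^ 4) by (apply pow_le; lra).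
      assert (0 <= (1 - a) * (d ^ 2 + d ^ 3 / 2)) by (apply Rmult_le_pos; nra).
      lra.
    - apply Rmult_le_compat; nra. }
  rewrite exp_split, Rmult_assoc.
  apply Rmult_le_compat_l; [apply Rlt_le, exp_pos | exact excess].
Qed.

Lemma Re_cexp_opp_ge_exp (a : R) (z : C) : a <= 1 -> Cmod z <= a ->
  exp (- a) <= Re (cexp (- z)).
Proof.
  intros a_le1 Hz. eapply Rle_trans; [| exact (Re_cexp_opp_ge a z a_le1 Hz)].
  pose proof (Rle_trans _ _ _ (Rle_abs _) (re_le_Cmod z)).
  assert (0 <= (1 - a) * (a - Re z)) by (apply Rmult_le_pos; lra).
  pose proof (exp_pos (- a)). nra.
Qed.

Lemma Re_cexp_opp_le_exp (a : R) (z : C) : a < 1 -> Cmod z <= a ->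
  Re (cexp (- z)) <= exp (- a) -> z = RtoC a.
Proof.
  intros a_lt1 Hz Hle. pose proof (Re_cexp_opp_ge a z ltac:(lra) Hz) as Hge.
  pose proof (Rle_trans _ _ _ (Rle_abs _) (re_le_Cmod z)).
  assert (Re_z : Re z = a).
  { assert (0 < exp (- a) * (1 - a)) by (apply Rmult_lt_0_compat; [apply exp_pos | lra]).
    nra. }
  rewrite <- Re_z. apply Cmod_le_Re. lra.
Qed.

Theorem lemma2p4 (a b : R) :
  0 < a < 1 -> 0 < b < 1 -> inV (RtoC a) (RtoC b) ->
  forall z w : C, Cmod z <= a -> Cmod w <= b -> inV z w ->
  z = RtoC a /\ w = RtoC b.
Proof.
  intros Ha Hb Hab z w Hz Hw Hzw.
  apply inV_Re_cexp in Hab. rewrite !Re_cexp_opp in Hab.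
  simpl in Hab. rewrite cos_0, !Rmult_1_r in Hab.
  apply inV_Re_cexp in Hzw.
  pose proof (Re_cexp_opp_ge_exp a z ltac:(lra) Hz).
  pose proof (Re_cexp_opp_ge_exp b w ltac:(lra) Hw).
  split; [apply (Re_cexp_opp_le_exp a) | apply (Re_cexp_opp_le_exp b)]; lra.
Qed.
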